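(* Let $1\le k\le N/2$ and $v\in E_k$. If $k=1$ and $\alpha\ge(N-1)/(N-2)$, then $t(v)<1$ and $v$ is linearly unstable. If $\alpha<(N-1)/(N-2)$, then $v$ is linearly unstable.
   Context: Let $N\ge3$, $\alpha>1$, and $A_{i,j}=1-\delta_{i,j}$ for $i,j\le N$. Let $\Delta=\{v\in\mathbb R_+^N:\sum_iv_i=1,\ v_i\le3/4\ \forall i\}$. For $v$ with nonnegative coordinates let $v^\alpha=(v_i^\alpha)_i$, $H(v)=\sum_{i\neq j}v_i^\alpha v_j^\alpha$, $\pi_i(v)=v_i^\alpha(Av^\alpha)_i/H(v)$, and on $\Delta$ let $F(v)=-v+\pi(v)$. An equilibrium is $v\in\Delta$ with $F(v)=0$. For $1\le k\le N/2$, $E_k$ denotes the set of equilibria $v$ with all coordinates positive, different from the center $(1/N,\dots,1/N)$, and such that $v_1=\dots=v_k$ and $v_{k+1}=\dots=v_N$. For $v\in E_k$, $t(v)=v_N/v_1$. With $DF(v)$ the differential at $v$ of $v\mapsto-v+\pi(v)$ acting on $\{x:\sum_ix_i=0\}$, an equilibrium is linearly unstable if some eigenvalue of $DF(v)$ has positive real part. *)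

From HB Require Import structures.
From mathcomp Require Import all_boot all_order all_algebra.
From mathcomp Require Import all_classical all_reals.
From mathcomp Require Import topology normedtype derive exp.
Set Implicit Arguments. Unset Strict Implicit. Unset Printing Implicit Defensive.
Import Order.TTheory GRing.Theory Num.Theory.
Import numFieldNormedType.Exports.
Local Open Scope ring_scope.

Section Defs.
Variable R : realType.
Variable N : nat.

(* Vectors of R^N are row vectors 'rV[R]_N; coordinate i (0-based) is v ord0 i.
   Paper index i (1..N) corresponds to the ordinal i-1. *)

(* the coordinate of v with 0-based index m (0 if m >= N) *)
Definition entry (v : 'rV[R]_N) (m : nat) : R :=
  \sum_(i < N | (i : nat) == m) v ord0 i.

Definition Amat : 'M[R]_N := \matrix_(i, j) (1 - (i == j)%:R).

Definition powv (alpha : R) (v : 'rV[R]_N) : 'rV[R]_N :=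
  \row_i (v ord0 i `^ alpha).

Definition Apow (alpha : R) (v : 'rV[R]_N) (i : 'I_N) : R :=
  \sum_j Amat i j * powv alpha v ord0 j.

Definition Hfun (alpha : R) (v : 'rV[R]_N) : R :=
  \sum_i \sum_(j | i != j) powv alpha v ord0 i * powv alpha v ord0 j.

Definition piv (alpha : R) (v : 'rV[R]_N) : 'rV[R]_N :=
  \row_i (powv alpha v ord0 i * Apow alpha v i / Hfun alpha v).

(* the map v |-> -v + pi(v) (F is its restriction to Delta) *)
Definition Ffun (alpha : R) (v : 'rV[R]_N) : 'rV[R]_N := - v + piv alpha v.

Definition Delta (v : 'rV[R]_N) : Prop :=
  (forall i, 0 <= v ord0 i) /\ \sum_i v ord0 i = 1 /\
  (forall i, v ord0 i <= 3%:R / 4%:R).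

Definition equilibrium (alpha : R) (v : 'rV[R]_N) : Prop :=
  Delta v /\ Ffun alpha v = 0.

Definition center : 'rV[R]_N := \row_(i < N) (N%:R)^-1.

Definition E_k (alpha : R) (k : nat) (v : 'rV[R]_N) : Prop :=
  equilibrium alpha v /\ (forall i, 0 < v ord0 i) /\ v <> center /\
  (forall i j : 'I_N, (i < k)%N -> (j < k)%N -> v ord0 i = v ord0 j) /\
  (forall i j : 'I_N, (k <= i)%N -> (k <= j)%N -> v ord0 i = v ord0 j).

Definition tv (v : 'rV[R]_N) : R := entry v N.-1 / entry v 0.

Definition tangent (x : 'rV[R]_N) : Prop := \sum_i x ord0 i = 0.

(* L (a real linear map, restricted to the invariant subspace S) has an
   eigenvalue lambda = a + i b with Re lambda = a > 0: there is a nonzero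
   complex eigenvector x + i y with x, y in S, i.e.
   L x = a x - b y and L y = b x + a y. *)
Definition has_eig_pos_re (L : 'rV[R]_N -> 'rV[R]_N)
    (S : 'rV[R]_N -> Prop) : Prop :=
  exists (a b : R) (x y : 'rV[R]_N),
    0 < a /\ S x /\ S y /\ (x <> 0 \/ y <> 0) /\
    L x = a *: x - b *: y /\ L y = b *: x + a *: y.

Definition lin_unstable (alpha : R) (v : 'rV[R]_N) : Prop :=
  has_eig_pos_re ('d (Ffun alpha) v) tangent.

End Defs.

(* At an equilibrium with positive coordinates, writing S = sum_j v_j^alpha, every
   coordinate satisfies H(v) = v_i^(alpha-1) (S - v_i^alpha): all coordinates lie on one
   level set of t |-> t^(alpha-1) (S - t^alpha).

   If two coordinates share a value c and some coordinate is larger, e_p - e_q is an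
   eigenvector of DF(v) with eigenvalue alpha c^(alpha-1) (S - 2 c^alpha) / H - 1. In the
   variable u = t^(alpha-1) the level function is u S - u^g with g = (2 alpha - 1)/(alpha - 1),
   strictly concave; taking equal values at c and at a larger point forces a positive slope
   at c, which is exactly the positivity of that eigenvalue.

   For v in E_k this leaves only k = 1 with v_1 < v_N. There the equilibrium equations reduce
   to the balance a^alpha + (N-2) b^alpha = (N-1) a^(alpha-1) b, and (N-1, -1, ..., -1) is an
   eigenvector with eigenvalue alpha (N-2) b^(2 alpha - 1) / H - 1, positive by the
   tangent-line inequality for t^alpha. The same inequality yields b < a, i.e. t(v) < 1, once
   alpha >= (N-1)/(N-2). So every v in E_k is linearly unstable, for every alpha > 1. *)

From Pilot Require Import Defs.
From HB Require Import structures.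
From mathcomp Require Import all_boot all_order all_algebra.
From mathcomp Require Import all_classical all_reals.
From mathcomp Require Import topology normedtype derive exp.
From mathcomp Require Import sequences.
From mathcomp Require Import ring lra zify.
Set Implicit Arguments. Unset Strict Implicit. Unset Printing Implicit Defensive.
Import Order.TTheory GRing.Theory Num.Theory.
Import numFieldNormedType.Exports.
Local Open Scope ring_scope.

Section PowerInequalities.
Variable R : realType.

Lemma powR_gt_tangent1 (s e : R) : 0 < s -> s != 1 -> 1 < e ->
  1 + e * (s - 1) < s `^ e.
Proof.
move=> s0 s1 e1.
have se : s `^ e = s * expR ((e - 1) * ln s).
  by rewrite -(mulr_powRB1 (ltW s0) (lt_trans ltr01 e1)) /powR gt_eqF.
have exp_gt : 1 + (e - 1) * ln s < expR ((e - 1) * ln s).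
  by apply: expR_gt1Dx; rewrite mulf_neq0 ?ln_eq0 // subr_eq0 gt_eqF.
have ln_inv : - ln s <= s^-1 - 1.
  have := @le_ln1Dx R (s^-1 - 1); rewrite [1 + _]addrC subrK lnV ?posrE //.
  apply; suff : 0 < s^-1 by lra.
  by rewrite invr_gt0.
have sln : s - 1 <= s * ln s.
  have : s * - ln s <= s * (s^-1 - 1) by rewrite ler_pM2l.
  by rewrite mulrBr divff ?gt_eqF // mulrN; lra.
rewrite se.
have : s * (1 + (e - 1) * ln s) < s * expR ((e - 1) * ln s) by rewrite ltr_pM2l.
have : (e - 1) * (s - 1) <= (e - 1) * (s * ln s) by rewrite ler_pM2l // subr_gt0.
nra.
Qed.

Lemma powR_gt_tangent (x y e : R) : 0 < x -> 0 < y -> x != y -> 1 < e ->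
  x `^ e + e * x `^ (e - 1) * (y - x) < y `^ e.
Proof.
move=> x0 y0 xy e1.
have yx1 : y / x != 1.
  by apply: contra xy => /eqP yx1; rewrite -(divfK (lt0r_neq0 x0) y) yx1 mul1r eqxx.
have xe := mulr_powRB1 (ltW x0) (lt_trans ltr01 e1).
have xe0 : 0 < x `^ e by apply: powR_gt0.
have := powR_gt_tangent1 (divr_gt0 y0 x0) yx1 e1.
have yxe : (y / x) `^ e = y `^ e / x `^ e.
  rewrite powRM ?invr_ge0 ?(ltW x0) ?(ltW y0) //.
  by rewrite -powR_inv1 ?(ltW x0) // powRAC powR_inv1 ?powR_ge0.
rewrite yxe ltr_pdivlMr // -xe.
suff -> : (1 + e * (y / x - 1)) * (x * x `^ (e - 1)) =
  x * x `^ (e - 1) + e * x `^ (e - 1) * (y - x) by [].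
by field; rewrite gt_eqF.
Qed.

Lemma powR_slope_lt_of_eq (S g u w : R) : 0 < u -> u < w -> 1 < g ->
  u * S - u `^ g = w * S - w `^ g -> g * u `^ (g - 1) < S.
Proof.
move=> u0 uw g1 Euw.
have := powR_gt_tangent u0 (lt_trans u0 uw) (negbT (lt_eqF uw)) g1.
have : 0 < w - u by rewrite subr_gt0.
nra.
Qed.

Lemma within_group_gap (c d al S : R) : 0 < c -> c < d -> 1 < al ->
  c `^ (al - 1) * (S - c `^ al) = d `^ (al - 1) * (S - d `^ al) ->
  (2 * al - 1) * c `^ al < (al - 1) * S.
Proof.
move=> c0 cd al1 Ecd.
have b0 : 0 < al - 1 by rewrite subr_gt0.
(* In u = t `^ (al - 1), the level function t `^ (al - 1) * (S - t `^ al) is u * S - u `^ g. *)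
pose g := (2 * al - 1) / (al - 1).
have g1 : 1 < g by rewrite ltr_pdivlMr // mul1r; lra.
have bg : (al - 1) * g = (al - 1) + al by rewrite /g; field; exact: lt0r_neq0.
have bg1 : (al - 1) * (g - 1) = al by rewrite /g; field; exact: lt0r_neq0.
have powg t : 0 < t -> (t `^ (al - 1)) `^ g = t `^ (al - 1) * t `^ al.
  by move=> t0; rewrite -powRrM bg powRD // (gt_eqF t0) implybT.
have powg1 t : (t `^ (al - 1)) `^ (g - 1) = t `^ al by rewrite -powRrM bg1.
have d0 : 0 < d := lt_trans c0 cd.
have cd' : c `^ (al - 1) < d `^ (al - 1).
  by apply: gt0_ltr_powR; rewrite ?nnegrE ?ltW.
have Eg : c `^ (al - 1) * S - (c `^ (al - 1)) `^ g =
          d `^ (al - 1) * S - (d `^ (al - 1)) `^ g by rewrite !powg // -!mulrBr.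
have := powR_slope_lt_of_eq (powR_gt0 _ c0) cd' g1 Eg.
by rewrite powg1 /g mulrAC ltr_pdivrMr // [S * _]mulrC.
Qed.

Lemma balance_lt (a b al m : R) : 0 < a -> 0 < b -> a != b -> 1 < al ->
  1 < m -> m <= al * (m - 1) ->
  a `^ al + (m - 1) * b `^ al = m * a `^ (al - 1) * b -> b < a.
Proof.
move=> a0 b0 ab al1 m1 hm E.
rewrite ltNge le_eqVlt negb_or ab /=; apply/negP => lt_ab.
have := powR_gt_tangent a0 b0 ab al1.
rewrite -(mulr_powRB1 (ltW a0) (lt_trans ltr01 al1)) in E *.
have a'0 : 0 < a `^ (al - 1) by apply: powR_gt0.
have : 0 < a `^ (al - 1) * (b - a) by rewrite mulr_gt0 // subr_gt0.
nra.
Qed.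

Lemma balance_gap (a b al m : R) : 0 < a -> a < b -> 1 < al -> 1 < m ->
  a `^ al + (m - 1) * b `^ al = m * a `^ (al - 1) * b ->
  a `^ al < (al - 1) * (m - 1) * b `^ al.
Proof.
move=> a0 ab al1 m1 E.
have b0 : 0 < b by apply: lt_trans ab.
have := powR_gt_tangent b0 a0 (negbT (gt_eqF ab)) al1.
rewrite -(mulr_powRB1 (ltW a0) (lt_trans ltr01 al1)) in E *.
rewrite -(mulr_powRB1 (ltW b0) (lt_trans ltr01 al1)) in E *.
have a'0 : 0 < a `^ (al - 1) by apply: powR_gt0.
have b'0 : 0 < b `^ (al - 1) by apply: powR_gt0.
set a' := a `^ (al - 1) in E *; set b' := b `^ (al - 1) in E *.
move=> tangent_b.
(* The balance equation turns X * (b - a) into (m - 1) times the tangent-line gap at b. *)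
set X := (m - 1) * al * b' - m * a'.
have HX : X * (b - a) = (m - 1) * (a * a' - b * b' + al * b' * (b - a)).
  rewrite /X; nra.
have X0 : 0 < X.
  have : 0 < X * (b - a) by rewrite HX; apply: mulr_gt0; lra.
  by rewrite pmulr_lgt0 // subr_gt0.
have : 0 < X * b by rewrite mulr_gt0.
rewrite /X; nra.
Qed.

End PowerInequalities.

Lemma sum_one_vs_rest (R : pzRingType) (N : nat) (i0 : 'I_N) (F : 'I_N -> R) (c : R) :
  (forall j, j != i0 -> F j = c) -> \sum_j F j = F i0 + (N%:R - 1) * c.
Proof.
move=> Fc; rewrite (bigD1 i0) //= (eq_bigr (fun=> c)) => [|j /Fc //].
rewrite sumr_const -[c *+ _]mulr_natl; congr (_ + _ * _).
have -> : #|[pred j | j != i0]| = N.-1 by rewrite cardC1 card_ord.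
by case: N i0 {F Fc} => [[]//|n] _; rewrite -natr1 addrK.
Qed.

Lemma natrB1_gt1 (R : numDomainType) (N : nat) : (2 < N)%N -> 1 < N%:R - 1 :> R.
Proof. by move=> N3; rewrite ltrBrDl (_ : 1 + 1 = 2%:R) // ltr_nat. Qed.

Section FfunFormulas.
Variables (R : realType) (N : nat) (al : R).
Implicit Types (w : 'rV[R]_N).

Definition powsum w := \sum_i w ord0 i `^ al.

Lemma Apow_powsum w i : Apow al w i = powsum w - w ord0 i `^ al.
Proof.
rewrite /Apow /powsum (bigD1 i) //= [in RHS](bigD1 i) //= !mxE eqxx subrr mul0r.
rewrite add0r addrAC subrr add0r; apply: eq_bigr => j ji.
by rewrite !mxE eq_sym (negbTE ji) subr0 mul1r.
Qed.

Lemma Hfun_powsum w : Hfun al w = powsum w ^+ 2 - \sum_i (w ord0 i `^ al) ^+ 2.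
Proof.
rewrite expr2 /powsum mulr_suml -sumrB; apply: eq_bigr => i _.
rewrite mulr_sumr [in RHS](bigD1 i) //= expr2 addrAC subrr add0r.
by apply: eq_big => [j|j _]; [rewrite eq_sym | rewrite !mxE].
Qed.

Lemma Ffun_coordE w i : Ffun al w ord0 i =
  - w ord0 i + w ord0 i `^ al * (powsum w - w ord0 i `^ al) / Hfun al w.
Proof. by rewrite /Ffun /piv !mxE Apow_powsum. Qed.

Lemma Hfun_ge0 w : 0 <= Hfun al w.
Proof.
by apply: sumr_ge0 => i _; apply: sumr_ge0 => j _; rewrite !mxE mulr_ge0 ?powR_ge0.
Qed.

Lemma powsum_fctE : powsum = \sum_i (fun w : 'rV[R]_N => w ord0 i `^ al).
Proof. by apply/funext => w; rewrite fct_sumE. Qed.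

Lemma Hfun_fctE : Hfun al =
  powsum ^+ 2 - \sum_i (fun w : 'rV[R]_N => w ord0 i `^ al) ^+ 2.
Proof. by apply/funext => w; rewrite Hfun_powsum /= fct_sumE. Qed.

End FfunFormulas.

Lemma differentiable_row (R : realType) (V : normedModType R) (M : nat)
    (f : V -> 'rV[R]_M) (v : V) :
  (forall j, differentiable (fun w => f w ord0 j) v) -> differentiable f v.
Proof.
move=> fd.
have -> : f = \sum_(j < M) (fun w => f w ord0 j *: (delta_mx ord0 j : 'rV[R]_M)).
  apply/funext => w; rewrite fct_sumE; apply/rowP => j.
  rewrite summxE (bigD1 j) //= !mxE eqxx mulr1 big1 ?addr0 // => k kj.
  by rewrite !mxE eqxx /= eq_sym (negbTE kj) mulr0.
by apply: differentiable_sum => j; apply: differentiableZl.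
Qed.

Lemma is_derive_coord (R : realType) (N : nat) (v x : 'rV[R]_N) j :
  is_derive v x (fun w : 'rV[R]_N => w ord0 j) (x ord0 j).
Proof.
apply: DeriveDef; first by move/derivable_mxP : (@derivable_id R _ v x); apply.
have := derive_mx (@derivable_id R _ v x); rewrite derive_id => /matrixP/(_ ord0 j).
by rewrite mxE.
Qed.

Lemma is_derive_inv (R : realType) (V : normedModType R) (f : V -> R) (v x : V) df :
  f v != 0 -> is_derive v x f df ->
  is_derive v x (fun w => (f w)^-1) (- (f v) ^- 2 * df).
Proof. by move=> fv0 [fd <-]; apply: DeriveDef; [exact: derivableV | exact: deriveV]. Qed.

Section Differential.
Variables (R : realType) (N : nat) (al : R) (v x : 'rV[R]_N).
Hypothesis vpos : forall i, 0 < v ord0 i.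

Local Notation p j := (v ord0 j `^ al).
Local Notation dp j := (al * v ord0 j `^ (al - 1) * x ord0 j).
Local Notation S := (powsum al v).
Local Notation dS := (\sum_j dp j).
Local Notation Q := (\sum_j p j * dp j).
Local Notation H := (Hfun al v).

Lemma differentiable_powR_coord j :
  differentiable (fun w : 'rV[R]_N => w ord0 j `^ al) v.
Proof.
have -> : (fun w : 'rV[R]_N => w ord0 j `^ al) =
  (fun y : R => y `^ al) \o (fun w : 'rV[R]_N => w ord0 j) by [].
apply: differentiable_comp; first exact: differentiable_coord.
by apply/derivable1_diffP/derivable_powR; rewrite in_itv /= vpos.
Qed.

Lemma differentiable_powsum : differentiable (powsum al) v.
Proof.
by rewrite powsum_fctE; apply: differentiable_sum => i; apply: differentiable_powR_coord.
Qed.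

Lemma differentiable_Hfun : differentiable (Hfun al) v.
Proof.
rewrite Hfun_fctE; apply: differentiableB; first exact/differentiableX/differentiable_powsum.
by apply: differentiable_sum => i; apply/differentiableX/differentiable_powR_coord.
Qed.

Lemma differentiable_Ffun : H != 0 -> differentiable (Ffun al) v.
Proof.
move=> Hv0; apply: differentiable_row => i.
have -> : (fun w => Ffun al w ord0 i) = fun w => - w ord0 i +
    w ord0 i `^ al * (powsum al w - w ord0 i `^ al) * (Hfun al w)^-1.
  by apply/funext => w; rewrite Ffun_coordE.
apply: differentiableD; first exact/differentiableN/differentiable_coord.
apply: differentiableM; first apply: differentiableM.
- exact: differentiable_powR_coord.
- exact/differentiableB/differentiable_powR_coord/differentiable_powsum.
- exact: differentiableV differentiable_Hfun Hv0.
Qed.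

Lemma is_derive_powR_coord j :
  is_derive v x (fun w : 'rV[R]_N => w ord0 j `^ al) (dp j).
Proof.
apply: DeriveDef; first exact/diff_derivable/differentiable_powR_coord.
rewrite deriveE; last exact: differentiable_powR_coord.
have dpow : differentiable (fun y : R => y `^ al) (v ord0 j).
  by apply/derivable1_diffP/derivable_powR; rewrite in_itv /= vpos.
have -> : (fun w : 'rV[R]_N => w ord0 j `^ al) =
  (fun y : R => y `^ al) \o (fun w : 'rV[R]_N => w ord0 j) by [].
have dc := differentiable_coord v ord0 j.
rewrite (diff_comp dc dpow) /=.
have := congr1 (fun F : R -> R => F ('d (fun w : 'rV[R]_N => w ord0 j) v x)) (diff1E dpow).
move=> /= ->; rewrite -deriveE //; case: (is_derive_coord v x j) => _ ->.
rewrite powR_derive1; last by rewrite in_itv /= vpos.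
exact: mulrC.
Qed.

Lemma is_derive_powsum : is_derive v x (powsum al) dS.
Proof.
by rewrite powsum_fctE; apply: is_derive_sum => i; apply: is_derive_powR_coord.
Qed.

Lemma is_derive_Hfun : is_derive v x (Hfun al) (2 * (S * dS - Q)).
Proof.
rewrite Hfun_fctE; apply: is_derive_eq.
  apply: is_deriveB; first exact/is_deriveX/is_derive_powsum.
  by apply: is_derive_sum => i; apply/is_deriveX/is_derive_powR_coord.
rewrite mulrBr mulrA mulr_sumr; congr (_ - _).
by rewrite mulr_sumr; apply: eq_bigr => i _; rewrite /= expr1; exact: esym (mulrA _ _ _).
Qed.

Lemma diff_Ffun_coord i : H != 0 -> 'd (Ffun al) v x ord0 i = - x ord0 i +
  ((dp i * (S - p i) + p i * (dS - dp i)) - p i * (S - p i) * (2 * (S * dS - Q)) / H) / H.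
Proof.
move=> Hv0.
have dF := differentiable_Ffun Hv0.
rewrite -deriveE // derive_mx ?mxE; last exact: diff_derivable.
have -> : (fun w => Ffun al w ord0 i) = fun w => - w ord0 i +
    w ord0 i `^ al * (powsum al w - w ord0 i `^ al) * (Hfun al w)^-1.
  by apply/funext => w; rewrite Ffun_coordE.
have dp_i := is_derive_powR_coord i.
have dnum := is_deriveM dp_i (is_deriveB is_derive_powsum dp_i).
have dquot := is_deriveM dnum (is_derive_inv Hv0 is_derive_Hfun).
have [_ ->] := is_deriveD (is_deriveN (is_derive_coord v x i)) dquot.
by rewrite !fctE -![_ *: _]/(_ * _); field.
Qed.

Lemma diff_Ffun_within (c : R) : H != 0 -> tangent x ->
  (forall j, x ord0 j != 0 -> v ord0 j = c) ->
  'd (Ffun al) v x = (al * c `^ (al - 1) * (S - 2 * c `^ al) / H - 1) *: x.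
Proof.
move=> Hv0 tx xc.
have dpE j : dp j = al * c `^ (al - 1) * x ord0 j.
  by have [->|/xc ->] := eqVneq (x ord0 j) 0; ring.
have pdpE j : p j * dp j = al * c `^ (al - 1) * c `^ al * x ord0 j.
  by have [->|/xc ->] := eqVneq (x ord0 j) 0; ring.
have dS0 : dS = 0 by rewrite (eq_bigr _ (fun j _ => dpE j)) -mulr_sumr tx mulr0.
have Q0 : Q = 0 by rewrite (eq_bigr _ (fun j _ => pdpE j)) -mulr_sumr tx mulr0.
apply/rowP => i; rewrite diff_Ffun_coord // dS0 Q0 mxE.
by have [->|/xc ->] := eqVneq (x ord0 i) 0; field.
Qed.

End Differential.

Lemma lin_unstable_of_eigen (R : realType) (N : nat) (al mu : R) (v x : 'rV[R]_N) :
  0 < mu -> tangent x -> x != 0 -> 'd (Ffun al) v x = mu *: x -> lin_unstable al v.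
Proof.
move=> mu0 tx xn0 Dx; exists mu, 0, x, 0; do !split => //.
- by rewrite /tangent big1 // => i _; rewrite mxE.
- by left; apply/eqP.
- by rewrite Dx scale0r subr0.
- by rewrite linear0 scale0r scaler0 addr0.
Qed.

Section Equilibrium.
Variables (R : realType) (N : nat) (al : R) (v : 'rV[R]_N).
Hypotheses (vpos : forall i, 0 < v ord0 i) (Fv0 : Ffun al v = 0) (al1 : 1 < al).

Local Notation p j := (v ord0 j `^ al).
Local Notation S := (powsum al v).
Local Notation H := (Hfun al v).

Lemma equilibrium_Hfun_neq0 (i : 'I_N) : H != 0.
Proof.
apply/eqP => H0; have := congr1 (fun M : 'rV[R]_N => M ord0 i) Fv0.
rewrite Ffun_coordE H0 invr0 mulr0 addr0 mxE => /eqP.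
by rewrite oppr_eq0 gt_eqF.
Qed.

Lemma equilibrium_Hfun_gt0 (i : 'I_N) : 0 < H.
Proof. by rewrite lt_def (equilibrium_Hfun_neq0 i) Hfun_ge0. Qed.

Lemma equilibrium_Hfun (i : 'I_N) : H = v ord0 i `^ (al - 1) * (S - p i).
Proof.
have Hv0 := equilibrium_Hfun_neq0 i.
have := congr1 (fun M : 'rV[R]_N => M ord0 i * H) Fv0.
rewrite Ffun_coordE mxE mul0r mulrDl divfK // => Fi.
apply: (mulfI (lt0r_neq0 (vpos i))).
rewrite mulrA (mulr_powRB1 (ltW (vpos i)) (lt_trans ltr01 al1)).
lra.
Qed.

Lemma within_unstable (i j k : 'I_N) : i != j -> v ord0 i = v ord0 j ->
  v ord0 i < v ord0 k -> lin_unstable al v.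
Proof.
move=> ij vij vik.
set c := v ord0 i in vij vik.
pose x : 'rV[R]_N := delta_mx ord0 i - delta_mx ord0 j.
have sum_delta l : \sum_m (delta_mx ord0 l : 'rV[R]_N) ord0 m = 1.
  rewrite (bigD1 l) //= big1 => [|m /negbTE ml]; first by rewrite mxE !eqxx addr0.
  by rewrite mxE ml andbF.
have tx : tangent x.
  rewrite /tangent (eq_bigr (fun m => (delta_mx ord0 i : 'rV[R]_N) ord0 m -
    (delta_mx ord0 j : 'rV[R]_N) ord0 m)) => [|m _]; last by rewrite !mxE.
  by rewrite sumrB !sum_delta subrr.
have xn0 : x != 0.
  apply/negP => /eqP /(congr1 (fun M : 'rV[R]_N => M ord0 i)).
  by rewrite !mxE !eqxx (negbTE ij) subr0 => /eqP; rewrite oner_eq0.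
have xc l : x ord0 l != 0 -> v ord0 l = c.
  rewrite !mxE eqxx /=.
  by have [->|_] := eqVneq l i; [|have [->|_] := eqVneq l j; last rewrite subrr eqxx].
have Hgt0 := equilibrium_Hfun_gt0 i.
apply: (lin_unstable_of_eigen _ tx xn0 (diff_Ffun_within vpos (lt0r_neq0 Hgt0) tx xc)).
have gap := within_group_gap (vpos i) vik al1
  (etrans (esym (equilibrium_Hfun i)) (equilibrium_Hfun k)).
rewrite subr_gt0 ltr_pdivlMr // mul1r {1}(equilibrium_Hfun i) -/c.
rewrite [al * _]mulrC -mulrA ltr_pM2l; last exact: powR_gt0 (vpos i).
by move: gap; rewrite -/c; lra.
Qed.

Section OneVsRest.
Variables i0 i1 : 'I_N.
Hypotheses (N3 : (2 < N)%N) (rest : forall j, j != i0 -> v ord0 j = v ord0 i1).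

Local Notation a := (v ord0 i0).
Local Notation b := (v ord0 i1).
Local Notation m := (N%:R - 1 : R).

Let m_gt1 : 1 < m := natrB1_gt1 R N3.

Lemma powsum_one_vs_rest : S = a `^ al + m * b `^ al.
Proof. by rewrite /powsum (@sum_one_vs_rest _ _ i0 _ (b `^ al)) // => j /rest ->. Qed.

Lemma equilibrium_Hfun_rest : H = b `^ (al - 1) * (a `^ al + (m - 1) * b `^ al).
Proof. by rewrite (equilibrium_Hfun i1) powsum_one_vs_rest; congr (_ * _); ring. Qed.

Lemma one_vs_rest_balance :
  a `^ al + (m - 1) * b `^ al = m * a `^ (al - 1) * b.
Proof.
have B0 : 0 < b `^ al by apply: powR_gt0.
have E : a `^ (al - 1) * (m * b `^ al) =
         b `^ (al - 1) * (a `^ al + (m - 1) * b `^ al).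
  rewrite -equilibrium_Hfun_rest (equilibrium_Hfun i0) powsum_one_vs_rest.
  by congr (_ * _); ring.
have bB := mulr_powRB1 (ltW (vpos i1)) (lt_trans ltr01 al1).
apply: (mulIf (lt0r_neq0 B0)).
rewrite [RHS](_ : _ = b * (a `^ (al - 1) * (m * b `^ al))); last by ring.
by rewrite E mulrA bB [RHS]mulrC.
Qed.

Lemma diff_Ffun_one_vs_rest :
  'd (Ffun al) v (\row_j (if j == i0 then m else -1)) =
  (al * (m - 1) * b `^ al * b `^ (al - 1) / H - 1) *:
  \row_j (if j == i0 then m else -1).
Proof.
set x := \row_j _.
have Hv0 := equilibrium_Hfun_neq0 i0.
have B0 : b `^ al != 0 by rewrite lt0r_neq0 ?powR_gt0.
have b'0 : b `^ (al - 1) != 0 by rewrite lt0r_neq0 ?powR_gt0.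
have m0 : m != 0 by rewrite lt0r_neq0 // (lt_trans ltr01 m_gt1).
have dS : \sum_j al * v ord0 j `^ (al - 1) * x ord0 j =
    al * a `^ (al - 1) * m + m * (al * b `^ (al - 1) * -1).
  rewrite (@sum_one_vs_rest _ _ i0 _ (al * b `^ (al - 1) * -1)) => [|j ji].
    by rewrite /x mxE eqxx.
  by rewrite /x mxE (negbTE ji) rest.
have Q : \sum_j v ord0 j `^ al * (al * v ord0 j `^ (al - 1) * x ord0 j) =
    a `^ al * (al * a `^ (al - 1) * m) + m * (b `^ al * (al * b `^ (al - 1) * -1)).
  rewrite (@sum_one_vs_rest _ _ i0 _ (b `^ al * (al * b `^ (al - 1) * -1))) => [|j ji].
    by rewrite /x mxE eqxx.
  by rewrite /x mxE (negbTE ji) rest.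
(* Solved for a `^ (al - 1) and a `^ al, the equilibrium equations make the claim a field
   identity. *)
have a'E : a `^ (al - 1) = H / (m * b `^ al).
  by rewrite (equilibrium_Hfun i0) powsum_one_vs_rest; field; rewrite B0 m0.
have AE : a `^ al = H / b `^ (al - 1) - (m - 1) * b `^ al.
  by rewrite equilibrium_Hfun_rest; field.
apply/rowP => i; rewrite diff_Ffun_coord // dS Q powsum_one_vs_rest mxE.
have [-> | ii0] := eqVneq i i0.
  by rewrite /x !mxE eqxx a'E AE; field; rewrite Hv0 B0 m0 b'0.
by rewrite /x !mxE (negbTE ii0) (rest ii0) a'E AE; field; rewrite Hv0 B0 m0 b'0.
Qed.

Lemma one_vs_rest_unstable : a < b -> lin_unstable al v.
Proof.
move=> ab.
have tx : tangent (\row_j (if j == i0 then m else -1) : 'rV[R]_N).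
  rewrite /tangent (@sum_one_vs_rest _ _ i0 _ (-1)) => [|j ji]; last by rewrite mxE (negbTE ji).
  by rewrite mxE eqxx mulrN1 subrr.
have xn0 : (\row_j (if j == i0 then m else -1) : 'rV[R]_N) != 0.
  apply/negP => /eqP/(congr1 (fun M : 'rV[R]_N => M ord0 i0)); rewrite !mxE eqxx.
  by move: m_gt1; lra.
apply: (lin_unstable_of_eigen _ tx xn0 diff_Ffun_one_vs_rest).
have gap := balance_gap (vpos i0) ab al1 m_gt1 one_vs_rest_balance.
rewrite subr_gt0 ltr_pdivlMr ?(equilibrium_Hfun_gt0 i0) // mul1r equilibrium_Hfun_rest.
rewrite [X in _ < X](_ : _ = b `^ (al - 1) * (al * (m - 1) * b `^ al)); last by ring.
by rewrite ltr_pM2l ?powR_gt0 //; lra.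
Qed.

Lemma one_vs_rest_lt : (N%:R - 1) / (N%:R - 2) <= al -> a != b -> b < a.
Proof.
move=> thr ab; apply: (balance_lt (vpos i0) (vpos i1) ab al1 m_gt1 _ one_vs_rest_balance).
have N2 : 0 < N%:R - 2 :> R by move: m_gt1; lra.
by move: thr; rewrite ler_pdivrMr //; lra.
Qed.

End OneVsRest.

Lemma two_level_unstable (k : nat) (a b : R) : (2 < N)%N -> (0 < k)%N -> (k < N.-1)%N ->
  (forall j : 'I_N, (j < k)%N -> v ord0 j = a) ->
  (forall j : 'I_N, (k <= j)%N -> v ord0 j = b) -> a != b -> lin_unstable al v.
Proof.
move=> N3 k0 kN va vb ab.
have N1 : (1 < N)%N by lia.
have kN' : (k < N)%N by lia.
have NN : (N.-1 < N)%N by lia.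
pose i0 := Ordinal (ltnW N1); pose ik := Ordinal kN'; pose ilast := Ordinal NN.
have vi0 : v ord0 i0 = a by apply: va.
have vik : v ord0 ik = b by apply: vb.
have [lt_ab | lt_ba | eq_ab] := ltgtP a b; last by rewrite eq_ab eqxx in ab.
- have [k_gt1 | k_le1] := ltnP 1 k.
    apply: (within_unstable (i := i0) (j := Ordinal N1) (k := ik)) => //.
      by rewrite vi0 va.
    by rewrite vi0 vik.
  apply: (one_vs_rest_unstable (i0 := i0) N3 _ (_ : v ord0 i0 < v ord0 ik)).
    move=> j ji; rewrite vik; apply: vb; rewrite (_ : k = 1%N); last by lia.
    by rewrite lt0n; apply: contra ji => /eqP j0; apply/eqP/val_inj.
  by rewrite vi0 vik.
- apply: (within_unstable (i := ik) (j := ilast) (k := i0)).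
  + by apply/eqP => /(congr1 val) /=; lia.
  + by rewrite vik vb // ltnW.
  + by rewrite vik vi0.
Qed.

End Equilibrium.

Lemma constant_sum1_center (R : realType) (N : nat) (v : 'rV[R]_N) (c : R) :
  (forall j, v ord0 j = c) -> \sum_j v ord0 j = 1 -> v = Defs.center R N.
Proof.
move=> vc vsum.
have Nc : N%:R * c = 1.
  rewrite -[RHS]vsum (eq_bigr (fun=> c)) => [|j _]; last exact: vc.
  by rewrite sumr_const card_ord mulr_natl.
have N0 : N%:R != 0 :> R.
  by apply/eqP => N0; move: Nc; rewrite N0 mul0r => /eqP; rewrite eq_sym oner_eq0.
by apply/rowP => j; rewrite !mxE vc -[c](mulKf N0) Nc mulr1.
Qed.

Lemma entry_ord (R : realType) (N : nat) (v : 'rV[R]_N) (i : 'I_N) :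
  entry v i = v ord0 i.
Proof. by rewrite /entry (big_pred1 i). Qed.

Theorem lemma4p5 (R : realType) (N : nat) (alpha : R) (k : nat)
    (v : 'rV[R]_N) :
  (3 <= N)%N -> 1 < alpha -> (1 <= k)%N -> (k.*2 <= N)%N ->
  E_k alpha k v ->
  ((k = 1%N -> (N%:R - 1) / (N%:R - 2) <= alpha ->
      tv v < 1 /\ lin_unstable alpha v) /\
   (alpha < (N%:R - 1) / (N%:R - 2) -> lin_unstable alpha v)).
Proof.
move=> N3 al1 k1 kN2 [[[_ [vsum _]] Fv0] [vpos [vcenter [eqA eqB]]]].
have kN : (k < N.-1)%N by rewrite -addnn in kN2; lia.
have N0 : (0 < N)%N by lia.
have kN' : (k < N)%N by lia.
have NN : (N.-1 < N)%N by lia.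
pose i0 := Ordinal N0; pose ik := Ordinal kN'; pose ilast := Ordinal NN.
have va (j : 'I_N) : (j < k)%N -> v ord0 j = v ord0 i0 by move=> jk; apply: eqA.
have vb (j : 'I_N) : (k <= j)%N -> v ord0 j = v ord0 ik by move=> kj; apply: eqB.
have ab : v ord0 i0 != v ord0 ik.
  apply: contra_not_neq vcenter => ab; apply: (constant_sum1_center (c := v ord0 i0)) vsum.
  by move=> j; case: (ltnP j k) => [/va | /vb ->].
have unstable := two_level_unstable vpos Fv0 al1 N3 k1 kN va vb ab.
split=> [k_eq1 thr|//]; split=> //.
have rest (j : 'I_N) : j != i0 -> v ord0 j = v ord0 ik.
  move=> ji; apply: vb; rewrite k_eq1 lt0n.
  by apply: contra ji => /eqP j0; apply/eqP/val_inj.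
rewrite /tv (entry_ord v ilast) (entry_ord v i0) (vb ilast (ltnW kN)) ltr_pdivrMr // mul1r.
exact: (one_vs_rest_lt vpos Fv0 al1 N3 rest thr ab).
Qed.
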